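(* The PBW basis of the commutative operad $\operatorname{Com}$ obtained (by taking the elements represented by increasing chains) from the CL-labelling of the partition posets which labels the edge between $(A_1,\dots,A_p)$ and the partition obtained by merging $A_i$ and $A_j$ by $\max(\min A_i,\min A_j)$ is the basis consisting of the binary left combs whose leaves are labelled from left to right by $1,\dots,n$.
   Context: $\operatorname{Com}$ is the operad of commutative associative algebras, generated by one symmetric binary operation $\mu$; its operadic partition posets are the posets of set partitions of $\{1,\dots,n\}$ ordered by refinement. The maximal chains of these posets correspond to levelled binary trees (one merge per level), and the associated PBW basis consists of the elements of $\operatorname{Com}$ (written as shuffle trees in $\mu$) represented by the unique strictly increasing (lexicographically minimal) maximal chains for the labelling. A binary left comb is the tree $(\cdots((x_1\mu x_2)\mu x_3)\cdots)\mu x_n$. *)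

From mathcomp Require Import all_boot.
Set Implicit Arguments. Unset Strict Implicit. Unset Printing Implicit Defensive.

(* Shuffle trees in the single binary generator mu of Com:
   leaves labelled by natural numbers, Node l r = (l mu r). *)
Inductive tree : Type := Leaf of nat | Node of tree & tree.

Fixpoint leftcomb (k : nat) : tree :=
  match k with
  | 0 => Leaf 0 (* unused: arity 0 *)
  | 1 => Leaf 1
  | k'.+1 => Node (leftcomb k') (Leaf k)
  end.

Section Partitions.
Variable n : nat.
(* The ground set {1,...,n} is modelled by 'I_n, element i standing for i+1. *)

Definition minb (B : {set 'I_n}) : nat := (\big[minn/n]_(i in B) val i).+1.

Definition discrete : {set {set 'I_n}} := [set [set i] | i : 'I_n].
Definition coarsest : {set {set 'I_n}} := [set [set: 'I_n]].

Definition merge_step (P Q : {set {set 'I_n}}) : Prop :=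
  exists A B, [/\ A \in P, B \in P, A != B &
                  Q = (A :|: B) |: ((P :\ A) :\ B)].

Definition maximal_chain (c : seq {set {set 'I_n}}) : Prop :=
  [/\ size c = n, nth set0 c 0 = discrete, nth set0 c n.-1 = coarsest &
      forall k, k.+1 < n -> merge_step (nth set0 c k) (nth set0 c k.+1)].

(* The CL-label of the edge P_k < P_{k+1}: the two merged blocks are
   P_k \ P_{k+1}, and the label is max (min A_i, min A_j). *)
Definition edge_label (c : seq {set {set 'I_n}}) (k : nat) : nat :=
  \max_(A in nth set0 c k :\: nth set0 c k.+1) minb A.

Definition increasing_chain (c : seq {set {set 'I_n}}) : Prop :=
  forall k, k.+2 < n -> edge_label c k < edge_label c k.+1.

(* The shuffle tree attached to block B at level k of the chain c:
   a block of P_0 is a leaf; a block created at step k'->k'+1 by merging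
   A1, A2 is (t(A1) mu t(A2)), the child with the smaller minimum on the left. *)
Fixpoint tree_at (c : seq {set {set 'I_n}}) (k : nat) (B : {set 'I_n}) : tree :=
  match k with
  | 0 => Leaf (minb B)
  | k'.+1 =>
      let P := nth set0 c k' in
      if B \in P then tree_at c k' B else
      match enum (P :\: nth set0 c k) with
      | [:: A1; A2] =>
          if minb A1 < minb A2 then Node (tree_at c k' A1) (tree_at c k' A2)
          else Node (tree_at c k' A2) (tree_at c k' A1)
      | _ => Leaf 0
      end
  end.

Definition chain_tree (c : seq {set {set 'I_n}}) : tree :=
  tree_at c n.-1 [set: 'I_n].

Definition pbw_basis (t : tree) : Prop :=
  exists c, [/\ maximal_chain c, increasing_chain c & chain_tree c = t].

End Partitions.

From mathcomp Require Import all_boot zify.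
Set Implicit Arguments. Unset Strict Implicit. Unset Printing Implicit Defensive.

(* Each label max (min A_i, min A_j) is at most n, and the n - 1 labels of an
   increasing maximal chain strictly increase, so the k-th label (counting
   from 0) is at most k + 2.  By induction the k-th partition of such a chain
   is {1..k+1}, {k+2}, ..., {n}: of all pairs of its blocks, only
   {1..k+1}, {k+2} has both minima at most k + 2.  Hence there is exactly one
   increasing maximal chain (its labels are 2, 3, ..., n), and the tree it
   represents is the left comb. *)

Lemma bigmin_leq (I : eqType) (r : seq I) (P : pred I) (F : I -> nat) x0 j :
  j \in r -> P j -> \big[minn/x0]_(i <- r | P i) F i <= F j.
Proof.
elim: r => [//|x r IHr]; rewrite inE big_cons => /orP[/eqP<- ->|jr Pj].
  exact: geq_minl.
by case: (P x); [apply: leq_trans (geq_minr _ _) _|]; apply: IHr.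
Qed.

Lemma incr_leq_bound (f : nat -> nat) m b :
  (forall k, k.+1 < m -> f k < f k.+1) -> (forall k, k < m -> f k <= b) ->
  forall k, k < m -> f k + (m.-1 - k) <= b.
Proof.
move=> f_incr f_bnd k km.
have f_shift d : k + d < m -> f k + d <= f (k + d).
  elim: d => [|d IHd] kdm; first by rewrite !addn0.
  have kdm' : k + d < m by lia.
  have := f_incr (k + d); rewrite -addnS => /(_ kdm) f_lt.
  have := IHd kdm'; lia.
have kdm : k + (m.-1 - k) < m by lia.
exact: leq_trans (f_shift _ kdm) (f_bnd _ kdm).
Qed.

Lemma setD_merge (T : finType) (P : {set {set T}}) A B :
  A \in P -> B \in P -> ~~ (B \subset A) -> ~~ (A \subset B) ->
  P :\: ((A :|: B) |: (P :\ A :\ B)) = [set A; B].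
Proof.
move=> AP BP BA AB.
have AU : (A == A :|: B) = false by apply/negbTE; apply: contraNneq BA => /esym/setUidPl.
have BU : (B == A :|: B) = false by apply/negbTE; apply: contraNneq AB => /esym/setUidPr.
apply/setP => X; rewrite !inE.
case: (eqVneq X A) => [->|XA]; first by rewrite [_ == _]AU andbF.
case: (eqVneq X B) => [->|XB]; first by rewrite [_ == _]BU /=.
by case: (X \in P); rewrite ?andbF //= andbT; case: eqP.
Qed.

Lemma enum_set2 (T : finType) (a b : T) : a != b ->
  enum [set a; b] = [:: a; b] \/ enum [set a; b] = [:: b; a].
Proof.
move=> ab; have := enum_uniq [set a; b]; have := mem_enum [set a; b].
have := cardE [set a; b]; rewrite cards2 ab.
case: (enum _) => [|x [|y [|]]] //= _ inAB; rewrite inE andbT.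
have := inAB x; have := inAB y; rewrite !inE !eqxx orbT /=.
by move=> /esym/orP[]/eqP-> /esym/orP[]/eqP->; rewrite ?eqxx // => _; [right|left].
Qed.

Section MaximalChains.
Variable n : nat.
Implicit Types (A B : {set 'I_n}) (P Q : {set {set 'I_n}}).
Implicit Type c : seq {set {set 'I_n}}.

Lemma minb_leq_mem A (j : 'I_n) : j \in A -> minb A <= j.+1.
Proof. by move=> jA; rewrite ltnS; apply: bigmin_leq; rewrite ?mem_index_enum. Qed.

Lemma minb_set1 (i : 'I_n) : minb [set i] = i.+1.
Proof.
apply/eqP; rewrite eqn_leq minb_leq_mem ?set11 //= ltnS.
apply: (big_rec (fun x => i <= x)); first exact: ltnW.
by move=> j x; rewrite inE => /eqP-> ix; rewrite leq_min leqnn.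
Qed.

Lemma minb_leq_n A : A != set0 -> minb A <= n.
Proof. by case/set0Pn => j /minb_leq_mem/leq_trans; apply. Qed.

Lemma edge_label_merge c k A B :
  A \in nth set0 c k -> B \in nth set0 c k ->
  ~~ (B \subset A) -> ~~ (A \subset B) ->
  nth set0 c k.+1 = (A :|: B) |: (nth set0 c k :\ A :\ B) ->
  edge_label c k = maxn (minb A) (minb B).
Proof.
move=> AP BP BA AB cE; have neqAB : A != B by apply: contraNneq BA => ->.
by rewrite /edge_label cE setD_merge // big_setU1 ?big_set1 // inE.
Qed.

Lemma merge_step_set0 P Q : set0 \notin P -> merge_step P Q -> set0 \notin Q.
Proof.
move=> P0 [A [B [AP _ _ ->]]]; rewrite !in_setU1 !in_setD1 negb_or (negPf P0).
rewrite !andbF andbT eq_sym; apply: contraNneq P0 => /eqP; rewrite setU_eq0.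
by case/andP=> /eqP<-.
Qed.

Lemma maximal_chain_set0 c : maximal_chain c ->
  forall k, k < n -> set0 \notin nth set0 c k.
Proof.
case=> _ c0 _ c_step; elim=> [_|k IHk kn].
  by rewrite c0; apply/imsetP => -[i _ /setP/(_ i)]; rewrite !inE eqxx.
exact: merge_step_set0 (IHk (ltnW kn)) (c_step k kn).
Qed.

Lemma edge_label_leq_n c : maximal_chain c ->
  forall k, k.+1 < n -> edge_label c k <= n.
Proof.
move=> c_max k kn; apply/bigmax_leqP => A; rewrite inE => /andP[_ AP].
by apply: minb_leq_n; apply: contraTneq AP => ->; apply: maximal_chain_set0 (ltnW kn).
Qed.

Lemma increasing_edge_label_leq c : maximal_chain c -> increasing_chain c ->
  forall k, k.+1 < n -> edge_label c k <= k.+2.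
Proof.
move=> c_max c_incr k kn.
have c_incr' j : j.+1 < n.-1 -> edge_label c j < edge_label c j.+1.
  by move=> jn; apply: c_incr; lia.
have c_bnd j : j < n.-1 -> edge_label c j <= n.
  by move=> jn; apply: (edge_label_leq_n c_max); lia.
have kn' : k < n.-1 by lia.
have := incr_leq_bound c_incr' c_bnd kn'; lia.
Qed.

End MaximalChains.

Section CombChain.
Variable n : nat.
Hypothesis n_gt0 : 0 < n.
Implicit Types (X Y : {set 'I_n}) (k : nat).

(* In the 1-based notation of the paper, [comb_partition k] is
   {1..k+1}, {k+2}, ..., {n}. *)
Definition initial_block k : {set 'I_n} := [set i : 'I_n | i <= k].
Definition comb_partition k : {set {set 'I_n}} :=
  initial_block k |: [set [set i] | i : 'I_n & k < i].
Definition comb_chain : seq {set {set 'I_n}} := mkseq comb_partition n.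

Lemma comb_partitionP k X :
  reflect (X = initial_block k \/ exists2 i : 'I_n, k < i & X = [set i])
          (X \in comb_partition k).
Proof.
rewrite in_setU1; apply: (iffP orP) => [[/eqP->|/imsetP[i]]|[->|[i ki ->]]].
- by left.
- by rewrite inE => ki ->; right; exists i.
- by left.
- by right; apply/imsetP; exists i; rewrite ?inE.
Qed.

Lemma initial_block_in k : initial_block k \in comb_partition k.
Proof. by apply/comb_partitionP; left. Qed.

Lemma set1_in_comb_partition k (i : 'I_n) : k < i -> [set i] \in comb_partition k.
Proof. by move=> ki; apply/comb_partitionP; right; exists i. Qed.

Lemma initial_block_neq_set1 k (i : 'I_n) : k < i -> initial_block k != [set i].
Proof. by move=> ki; apply/eqP => /setP/(_ i); rewrite !inE eqxx leqNgt ki. Qed.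

Lemma minb_initial_block k : minb (initial_block k) = 1.
Proof. by apply/anti_leq; rewrite (@minb_leq_mem _ _ (Ordinal n_gt0)) ?inE. Qed.

Lemma initial_block_last : initial_block n.-1 = [set: 'I_n].
Proof. by apply/setP => i; rewrite !inE -ltnS prednK ?ltn_ord. Qed.

Lemma initial_block_setU1 k (j : 'I_n) :
  val j = k.+1 -> initial_block k :|: [set j] = initial_block k.+1.
Proof. by move=> jk; apply/setP => i; rewrite !inE -val_eqE jk orbC -leq_eqVlt. Qed.

Lemma comb_partition_subset_eq k X Y :
  X \in comb_partition k -> Y \in comb_partition k -> Y \subset X -> Y = X.
Proof.
move=> /comb_partitionP X_k /comb_partitionP[->|[j kj ->]] /subsetP YX.
  have : Ordinal n_gt0 \in X by apply: YX; rewrite inE.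
  by case: X_k => [->//|[i ki ->]]; rewrite inE => /eqP/(congr1 val)/= i0; rewrite -i0 in ki.
have : j \in X by apply: YX; rewrite inE.
by case: X_k => [->|[i _ ->]]; rewrite inE; [rewrite leqNgt kj | move/eqP->].
Qed.

Lemma comb_partition_subsetN k X Y :
  X \in comb_partition k -> Y \in comb_partition k -> X != Y -> ~~ (Y \subset X).
Proof. by move=> Xk Yk; apply: contra_neqN => /(comb_partition_subset_eq Xk Yk)->. Qed.

Lemma comb_partition_setU_notin k X Y :
  X \in comb_partition k -> Y \in comb_partition k -> X != Y ->
  X :|: Y \notin comb_partition k.
Proof.
move=> Xk Yk; apply: contra_neqN => XYk.
apply: etrans (comb_partition_subset_eq XYk Xk (subsetUl _ _)) _.
exact/esym/(comb_partition_subset_eq XYk Yk (subsetUr _ _)).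
Qed.

Lemma merge_comb_partition k (j : 'I_n) : val j = k.+1 ->
  (initial_block k :|: [set j]) |: (comb_partition k :\ initial_block k :\ [set j])
  = comb_partition k.+1.
Proof.
move=> jk; rewrite initial_block_setU1 //; apply/setP => X.
rewrite /comb_partition !in_setU1 !in_setD1; congr (_ || _); apply/idP/idP.
  case/and3P => Xj /negPf XI; rewrite in_setU1 XI => /imsetP[i]; rewrite inE => ki XE.
  apply/imsetP; exists i => //; rewrite inE ltn_neqAle ki andbT.
  by apply: contra_neq Xj => ik; rewrite XE; congr [set _]; apply: val_inj; rewrite jk.
case/imsetP => i; rewrite inE => ki ->.
rewrite (inj_eq set1_inj) -val_eqE jk neq_ltn ki orbT [[set i] == _]eq_sym.
by rewrite (initial_block_neq_set1 (ltnW ki)) (set1_in_comb_partition (ltnW ki)).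
Qed.

Lemma comb_partition_setD k (hk : k.+1 < n) :
  comb_partition k :\: comb_partition k.+1 = [set initial_block k; [set Ordinal hk]].
Proof.
have k_j : k < Ordinal hk by [].
have k_init := initial_block_in k; have j_k := set1_in_comb_partition k_j.
have init_j := initial_block_neq_set1 k_j.
rewrite -(merge_comb_partition (j := Ordinal hk)) // setD_merge //.
  exact: comb_partition_subsetN k_init j_k init_j.
by apply: comb_partition_subsetN j_k k_init _; rewrite eq_sym.
Qed.

Lemma comb_partition_merge_leq k X Y : k.+1 < n ->
  X \in comb_partition k -> Y \in comb_partition k -> X != Y ->
  maxn (minb X) (minb Y) <= k.+2 ->
  (X :|: Y) |: (comb_partition k :\ X :\ Y) = comb_partition k.+1.
Proof.
move=> kn /comb_partitionP[|[i ki]] -> /comb_partitionP[|[i' ki']] ->;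
  rewrite ?eqxx // => XY; rewrite geq_max ?minb_set1 ?minb_initial_block //=.
- move=> i'k; have -> : i' = Ordinal kn by apply: val_inj => /=; lia.
  exact: merge_comb_partition.
- move=> /andP[ik _]; have -> : i = Ordinal kn by apply: val_inj => /=; lia.
  rewrite (setUC [set _] (initial_block k)) setDDl (setUC [set [set _]]) -setDDl.
  exact: merge_comb_partition.
- move=> /andP[ik i'k]; suff ii' : i = i' by rewrite ii' eqxx in XY.
  by apply: val_inj => /=; lia.
Qed.

Lemma nth_comb_chain k : k < n -> nth set0 comb_chain k = comb_partition k.
Proof. exact: nth_mkseq. Qed.

Lemma comb_partition0 : comb_partition 0 = discrete n.
Proof.
apply/setP => X; apply/comb_partitionP/imsetP => [[->|[i _ ->]]|[i _ ->]].
- exists (Ordinal n_gt0) => //; apply/setP => i; rewrite !inE leqn0.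
  by rewrite -val_eqE.
- by exists i.
- case: (posnP i) => [i0|]; last by right; exists i.
  by left; apply/setP => x; rewrite !inE leqn0 -i0 val_eqE.
Qed.

Lemma comb_partition_last : comb_partition n.-1 = coarsest n.
Proof.
apply/setP => X; rewrite in_set1; apply/comb_partitionP/eqP => [[->|[i ni _]]|->].
- exact: initial_block_last.
- by have := ltn_ord i; lia.
- by left; rewrite initial_block_last.
Qed.

Lemma maximal_comb_chain : maximal_chain comb_chain.
Proof.
split.
- exact: size_mkseq.
- by rewrite nth_comb_chain // comb_partition0.
- by rewrite nth_comb_chain ?comb_partition_last // prednK.
- move=> k kn; rewrite !nth_comb_chain ?(ltnW kn) //.
  exists (initial_block k), [set Ordinal kn]; split.
  + exact: initial_block_in.
  + exact: set1_in_comb_partition.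
  + exact: initial_block_neq_set1.
  + by rewrite merge_comb_partition.
Qed.

Lemma edge_label_comb_chain k : k.+1 < n -> edge_label comb_chain k = k.+2.
Proof.
move=> kn; set j := Ordinal kn; have k_j : k < j by [].
have init_k := initial_block_in k; have j_k := set1_in_comb_partition k_j.
have init_j := initial_block_neq_set1 k_j.
rewrite (@edge_label_merge _ _ k (initial_block k) [set j]) ?nth_comb_chain ?(ltnW kn) //.
- by rewrite minb_initial_block minb_set1.
- exact: comb_partition_subsetN init_k j_k init_j.
- by apply: comb_partition_subsetN j_k init_k _; rewrite eq_sym.
- by rewrite merge_comb_partition.
Qed.

Lemma increasing_comb_chain : increasing_chain comb_chain.
Proof. by move=> k kn; rewrite !edge_label_comb_chain ?(ltnW kn). Qed.

Lemma increasing_maximal_chain_eq c : maximal_chain c -> increasing_chain c ->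
  c = comb_chain.
Proof.
move=> c_max c_incr; have [c_size c0 _ c_step] := c_max.
apply: (@eq_from_nth _ set0); rewrite ?c_size ?size_mkseq // => k.
elim: k => [|k IHk] kn; rewrite nth_comb_chain //; first by rewrite c0 comb_partition0.
have c_k : nth set0 c k = comb_partition k by rewrite IHk ?nth_comb_chain ?(ltnW kn).
have [A [B [AP BP AB cE]]] := c_step k kn; rewrite c_k in AP BP cE.
have BA : ~~ (B \subset A) := comb_partition_subsetN AP BP AB.
have AB' : ~~ (A \subset B) by apply: comb_partition_subsetN BP AP _; rewrite eq_sym.
rewrite cE comb_partition_merge_leq // -(@edge_label_merge _ c k) ?c_k //.
exact: increasing_edge_label_leq.
Qed.

Lemma tree_at_comb_set1 k (i : 'I_n) : k < i -> tree_at comb_chain k [set i] = Leaf i.+1.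
Proof.
elim: k => [|k IHk] ki /=; first by rewrite minb_set1.
rewrite nth_comb_chain; last by have := ltn_ord i; lia.
by rewrite set1_in_comb_partition ?IHk ?(ltnW ki).
Qed.

Lemma tree_at_comb_initial k : k < n ->
  tree_at comb_chain k (initial_block k) = leftcomb k.+1.
Proof.
elim: k => [|k IHk] kn /=; first by rewrite minb_initial_block.
set j : 'I_n := Ordinal kn; have k_j : k < j by [].
have init_j := initial_block_neq_set1 k_j.
have init_j_notin := comb_partition_setU_notin (initial_block_in k)
  (set1_in_comb_partition k_j) init_j.
rewrite !nth_comb_chain ?(ltnW kn) // -(@initial_block_setU1 k j) //.
rewrite (negPf init_j_notin) comb_partition_setD.
by case: (enum_set2 init_j) => ->; rewrite minb_initial_block minb_set1 /=;
  rewrite tree_at_comb_set1 // IHk ?(ltnW kn).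
Qed.

Lemma chain_tree_comb_chain : chain_tree comb_chain = leftcomb n.
Proof.
by rewrite /chain_tree -initial_block_last tree_at_comb_initial ?prednK // ltn_predL.
Qed.

End CombChain.

Theorem mainTheorem5 (n : nat) (hn : 0 < n) (t : tree) :
  pbw_basis n t <-> t = leftcomb n.
Proof.
split=> [[c [c_max c_incr <-]]|->].
  by rewrite (increasing_maximal_chain_eq hn c_max c_incr) chain_tree_comb_chain.
exists (comb_chain n); split.
- exact: maximal_comb_chain.
- exact: increasing_comb_chain.
- exact: chain_tree_comb_chain.
Qed.
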